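(* Let $1\le p<\infty$ and let $d_{w,p}$ be a Lorentz sequence space. The formal identity operator $j\colon\ell_p\to d_{w,p}$ is finitely strictly singular.
   Context: Let $1\le p<\infty$ and let $w=(w_n)$ be a real sequence with $w_1=1$, $w_n\downarrow 0$ and $\sum_n w_n=\infty$. The Lorentz sequence space $d_{w,p}$ is the Banach space of all $x=(x_n)\in c_0$ with $\|x\|_{d_{w,p}}=\big(\sum_{n}w_n (x^*_n)^p\big)^{1/p}<\infty$, where $(x^*_n)$ is the non-increasing rearrangement of $(|x_n|)$. The formal identity $j\colon\ell_p\to d_{w,p}$ maps the $n$-th unit vector of $\ell_p$ to the $n$-th unit vector of $d_{w,p}$. An operator $T\colon X\to Y$ is finitely strictly singular if for every $\varepsilon>0$ there is $N\in\mathbb N$ such that every subspace $Z\subseteq X$ with $\dim Z\ge N$ contains $z$ with $\|Tz\|<\varepsilon\|z\|$. *)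

From HB Require Import structures.
From mathcomp Require Import all_boot all_order all_algebra.
From mathcomp Require Import all_classical all_reals all_analysis.
Set Implicit Arguments. Unset Strict Implicit. Unset Printing Implicit Defensive.
Import Order.TTheory GRing.Theory Num.Theory numFieldNormedType.Exports.
Local Open Scope classical_set_scope.
Local Open Scope ring_scope.

(* Sequences are indexed from 0: x 0, x 1, ... (paper: x_1, x_2, ...). *)

Section LorentzDefs.
Variable R : realType.

Definition in_lp (p : R) (x : nat -> R) : Prop :=
  cvgn (series (fun k => `|x k| `^ p)).

Definition lp_norm (p : R) (x : nat -> R) : R :=
  (limn (series (fun k => `|x k| `^ p))) `^ (p^-1).

Definition in_c0 (x : nat -> R) : Prop := x @ \oo --> (0 : R).

(* non-increasing rearrangement of (|x_k|), 0-indexed: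
   x*_n = inf over sets A of at most n indices of sup_{k not in A} |x k| *)
Definition rearr (x : nat -> R) (n : nat) : R :=
  inf [set r : R | exists A : seq nat, (size A <= n)%N /\
        r = sup [set `|x k| | k in [set k : nat | k \notin A]]].

Definition in_dwp (w : nat -> R) (p : R) (x : nat -> R) : Prop :=
  in_c0 x /\ cvgn (series (fun n => w n * rearr x n `^ p)).

Definition dwp_norm (w : nat -> R) (p : R) (x : nat -> R) : R :=
  (limn (series (fun n => w n * rearr x n `^ p))) `^ (p^-1).

Definition jmap (x : nat -> R) : nat -> R := x.

Definition lp_subspace (p : R) (Z : set (nat -> R)) : Prop :=
  Z `<=` in_lp p /\ Z (fun _ => 0) /\
  (forall (a b : R) (x y : nat -> R), Z x -> Z y ->
     Z (fun k => a * x k + b * y k)).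

Definition lin_indep (N : nat) (v : 'I_N -> nat -> R) : Prop :=
  forall c : 'I_N -> R, (forall k, \sum_(i < N) c i * v i k = 0) ->
    forall i, c i = 0.

Definition dim_ge (Z : set (nat -> R)) (N : nat) : Prop :=
  exists v : 'I_N -> nat -> R, (forall i, Z (v i)) /\ lin_indep v.

Definition lorentz_weight (w : nat -> R) : Prop :=
  w 0%N = 1 /\ (forall n, w n.+1 <= w n) /\ w @ \oo --> (0 : R) /\
  ~ cvgn (series w).

End LorentzDefs.

From HB Require Import structures.
From mathcomp Require Import all_boot all_order all_algebra.
From mathcomp Require Import all_classical all_reals all_analysis.
From mathcomp Require Import ring lra.
Import Order.TTheory GRing.Theory Num.Theory numFieldNormedType.Exports.
Local Open Scope classical_set_scope.
Local Open Scope ring_scope.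
Set Implicit Arguments. Unset Strict Implicit. Unset Printing Implicit Defensive.

(* Given eps, pick K with w_K < eps^p/2 and N > 2K/eps^p.  Every N-dimensional
   subspace of l_p, a subspace of c_0, contains a vector z whose modulus attains
   its maximum M at N distinct coordinates: starting from 0, repeatedly add a
   multiple of a vector vanishing on the coordinates obtained so far, as large
   as the bound M allows.  Then ||z||_p^p >= N M^p, while splitting the Lorentz
   sum at K gives ||z||_{d_{w,p}}^p <= K M^p + w_K ||z||_p^p < eps^p ||z||_p^p. *)

Lemma notin_seq_from (A : seq nat) : exists k, forall j, (k <= j)%N -> j \notin A.
Proof.
exists (\max_(a <- A) a).+1 => j; apply: contraTN => jA.
by rewrite -ltnNge ltnS (leq_bigmax_seq _ jA).
Qed.

Section VanishingAtInfinity.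
Variable R : realType.

Lemma eventually_ge_argmin (f : nat -> R) (P : nat -> Prop) (k0 J : nat) :
  P k0 -> (forall k, (J <= k)%N -> P k -> f k0 <= f k) ->
  exists2 k1, P k1 & forall k, P k -> f k1 <= f k.
Proof.
move=> Pk0 HJ; pose B := maxn J k0.+1.
have k0B : (k0 < B)%N by rewrite leq_maxr.
pose PB := [pred i : 'I_B | `[< P i >]].
have PBk0 : PB (Ordinal k0B) by apply/asboolP.
case: (arg_minP (fun i : 'I_B => f i) PBk0) => i /asboolP Pi imin.
exists i => // k Pk; have [kB|] := ltnP k B.
  by apply: (imin (Ordinal kB)); apply/asboolP.
rewrite geq_max => /andP[Jk _]; exact: le_trans (imin _ PBk0) (HJ k Jk Pk).
Qed.

Lemma in_lp_c0 (p : R) (x : nat -> R) : 0 < p -> in_lp p x -> in_c0 x.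
Proof.
move=> p0 /cvg_series_cvg_0 /cvgr0Pnorm_lt xp; apply/cvgr0Pnorm_lt => c c0.
apply: filterS (xp _ (powR_gt0 p c0)) => k /=; rewrite ger0_norm ?powR_ge0 //.
apply: contraTT; rewrite -!leNgt => cx.
by apply: ge0_ler_powR; rewrite ?nnegrE ?(ltW p0) ?(ltW c0).
Qed.

Lemma in_c0_lt (x : nat -> R) (c : R) : in_c0 x -> 0 < c ->
  exists J, forall k, (J <= k)%N -> `|x k| < c.
Proof. by move=> /cvgr0Pnorm_lt/(_ c) xc /xc[J _ HJ]; exists J. Qed.

Lemma c0_argmax (x : nat -> R) (A : seq nat) : in_c0 x ->
  exists2 k, k \notin A & forall j, j \notin A -> `|x j| <= `|x k|.
Proof.
move=> x0; have [[j0 [j0A xj0]]|] := pselect (exists j, j \notin A /\ 0 < `|x j|).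
  have [J HJ] := in_c0_lt x0 xj0.
  have [k kA kmin] : exists2 k, k \notin A & forall j, j \notin A -> - `|x k| <= - `|x j|.
    apply: (eventually_ge_argmin (J := J) j0A) => k Jk _.
    by rewrite lerN2 ltW // HJ.
  by exists k => // j /kmin; rewrite lerN2.
move=> xA; have [k Ak] := notin_seq_from A.
exists k => [|j jA]; first exact: Ak.
apply: le_trans (normr_ge0 (x k)); rewrite leNgt; apply/negP => xj.
by apply: xA; exists j.
Qed.

End VanishingAtInfinity.

Section Rearrangement.
Variables (R : realType) (x : nat -> R) (M : R).
Hypothesis x_le : forall k, `|x k| <= M.

Definition sup_outside (A : seq nat) : R :=
  sup [set `|x k| | k in [set k : nat | k \notin A]].

Lemma rearrE n : rearr x n =
  inf [set r : R | exists A : seq nat, (size A <= n)%N /\ r = sup_outside A].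
Proof. by []. Qed.

Lemma sup_outside_ge0 A : 0 <= sup_outside A.
Proof.
have [k Ak] := notin_seq_from A.
apply: le_trans (normr_ge0 (x k)) _; apply: ub_le_sup; last by exists k => //; apply: Ak.
by exists M => _ [j _ <-].
Qed.

Lemma sup_outside_le A k : (forall j, j \notin A -> `|x j| <= `|x k|) ->
  sup_outside A <= `|x k|.
Proof.
have [j Aj] := notin_seq_from A.
move=> kmax; apply: ge_sup => [|_ [i iA <-]]; last exact: kmax.
by exists `|x j|, j => //; apply: Aj.
Qed.

Lemma rearr_ge0 n : 0 <= rearr x n.
Proof.
rewrite rearrE; apply: lb_le_inf => [|_ [A [_ ->]]]; last exact: sup_outside_ge0.
by exists (sup_outside [::]), [::].
Qed.

Lemma rearr_le_sup_outside n A : (size A <= n)%N -> rearr x n <= sup_outside A.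
Proof.
move=> An; rewrite rearrE; apply: ge_inf; last by exists A.
by exists 0 => _ [B [_ ->]]; apply: sup_outside_ge0.
Qed.

Lemma rearr_le n : rearr x n <= M.
Proof.
apply: le_trans (rearr_le_sup_outside (A := [::]) (leq0n n)) _.
by apply: ge_sup => [|_ [k _ <-] //]; exists `|x 0%N|, 0%N.
Qed.

(* Each x*_n is dominated by a new coordinate, chosen greedily as a maximum of
   |x| off the coordinates already used. *)
Lemma rearr_sum_le_seq (p : R) : 0 <= p -> in_c0 x -> forall m,
  exists2 A, uniq A & \sum_(0 <= n < m) rearr x n `^ p <= \sum_(k <- A) `|x k| `^ p.
Proof.
move=> p0 x0 m; suff [A [_ uA AX]] : exists A, [/\ size A = m, uniq A &
    \sum_(0 <= n < m) rearr x n `^ p <= \sum_(k <- A) `|x k| `^ p] by exists A.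
elim: m => [|m [A [Am uA AX]]]; first by exists [::]; rewrite !big_nil.
have [k kA kmax] := c0_argmax A x0.
exists (k :: A); split; rewrite /= ?Am ?kA //.
rewrite big_nat_recr //= big_cons addrC lerD //.
apply: ge0_ler_powR; rewrite ?nnegrE ?rearr_ge0 //.
by apply: le_trans (rearr_le_sup_outside (eq_leq Am)) (sup_outside_le kmax).
Qed.

End Rearrangement.

Section NonnegSeries.
Variables (R : realType) (f : nat -> R).
Hypothesis f_ge0 : forall k, 0 <= f k.

Lemma series_nondecreasing : nondecreasing_seq (series f).
Proof. by apply: (@nondecreasing_series _ f xpredT) => k _ _; apply: f_ge0. Qed.

Lemma sum_uniq_le_limn_series (A : seq nat) : uniq A -> cvgn (series f) ->
  \sum_(k <- A) f k <= limn (series f).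
Proof.
move=> uA cf; have [B AB] := notin_seq_from A.
apply: le_trans (nondecreasing_cvgn_le series_nondecreasing cf B).
have AB' : perm_eq A [seq k <- index_iota 0 B | k \in A].
  apply: uniq_perm; rewrite ?filter_uniq ?iota_uniq // => k.
  rewrite mem_filter mem_index_iota /=; case kA: (k \in A) => //=.
  by apply/esym; rewrite ltnNge; apply: contraL kA => /AB.
rewrite (perm_big _ AB') big_filter big_mkcond /series /=.
by apply: ler_sum => k _; case: ifP.
Qed.

Lemma limn_series_le (B : R) : (forall m, series f m <= B) ->
  0 <= limn (series f) <= B.
Proof.
move=> fB; have cf : cvgn (series f).
  by apply: nondecreasing_is_cvgn series_nondecreasing _; exists B => _ [m _ <-].
apply/andP; split; last by apply: limr_le => //; apply: nearW.
apply: le_trans (nondecreasing_cvgn_le series_nondecreasing cf 0%N).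
by rewrite /series /= big_nil.
Qed.

End NonnegSeries.

Section Subspace.
Variables (R : realType) (p : R) (Z : set (nat -> R)).
Hypothesis Zsub : lp_subspace p Z.

Lemma lp_subspace_sum n (c : 'I_n -> R) (v : 'I_n -> nat -> R) :
  (forall i, Z (v i)) -> Z (fun k => \sum_(i < n) c i * v i k).
Proof.
case: Zsub => _ [Z0 Zlin]; elim: n c v => [|n IHn] c v Zv.
  by rewrite (_ : (fun _ => _) = fun _ => 0) //; apply: funext => k; rewrite big_ord0.
rewrite (_ : (fun _ => _) = fun k => 1 * (\sum_(i < n) c (widen_ord (leqnSn n) i)
  * v (widen_ord (leqnSn n) i) k) + c ord_max * v ord_max k).
  by apply: Zlin => //; apply: IHn.
by apply: funext => k; rewrite big_ord_recr mul1r.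
Qed.

(* Fewer than N linear conditions y_s = 0 (s in S) have a nonzero solution in
   the span of N independent vectors: take a nonzero row of the kernel of the
   N x |S| matrix (v_i s). *)
Lemma lp_subspace_vanishing N (v : 'I_N -> nat -> R) (S : seq nat) :
  (forall i, Z (v i)) -> lin_indep v -> (size S < N)%N ->
  exists y, [/\ Z y, exists k, y k != 0 & {in S, forall s, y s = 0}].
Proof.
move=> Zv vindep SN.
pose A : 'M[R]_(N, size S) := \matrix_(i, l) v i (nth 0%N S l).
have [i0 Ki0] : exists i0, row i0 (kermx A) != 0.
  apply/not_existsP => K0; suff : (0 < \rank (kermx A))%N.
    rewrite lt0n mxrank_eq0 => /negP; apply; apply/eqP/row_matrixP => i.
    by rewrite row0; apply/eqP/negPn/negP/K0.
  by rewrite mxrank_ker subn_gt0; apply: leq_ltn_trans (rank_leq_col A) SN.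
pose c i := kermx A i0 i.
exists (fun k => \sum_(i < N) c i * v i k); split; first exact: lp_subspace_sum.
- apply/not_existsP => y0; move/negP: Ki0; apply; apply/eqP/rowP => j.
  rewrite mxE [RHS]mxE; apply: (vindep c) => k; apply/eqP/negPn/negP/y0.
- move=> s sS; have sI : (index s S < size S)%N by rewrite index_mem.
  have := congr1 (fun B : 'M[R]_(N, size S) => B i0 (Ordinal sI)) (mulmx_ker A).
  rewrite mxE [RHS]mxE => ker0; rewrite -[RHS]ker0.
  by apply: eq_bigr => i _; rewrite [A i _]mxE /= nth_index.
Qed.

End Subspace.

Section Peak.
Variable R : realType.

(* For [a != 0] and [|b| <= M], the least [t >= 0] with [|b + t a| = M]. *)
Definition shift_to (M a b : R) : R := (M - Num.sg a * b) / `|a|.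

Lemma norm_add_scale_sg (a b t : R) : a != 0 ->
  `|b + t * a| = `|Num.sg a * b + t * `|a| |.
Proof.
move=> a0; have sga : `|Num.sg a| = 1 by rewrite normr_sg a0.
by rewrite -[LHS]mul1r -sga -normrM mulrDr mulrCA -normrEsg.
Qed.

Lemma sg_mul_le (a b : R) : Num.sg a * b <= `|b|.
Proof.
apply: le_trans (ler_norm _) _; rewrite normrM normr_sg.
by case: (a != 0); rewrite ?mul1r ?mul0r.
Qed.

Lemma sg_mul_ge (a b : R) : - `|b| <= Num.sg a * b.
Proof. by rewrite lerNl -mulrN -normrN sg_mul_le. Qed.

Lemma shift_to_ge0 (M a b : R) : `|b| <= M -> 0 <= shift_to M a b.
Proof. by move=> bM; rewrite divr_ge0 // subr_ge0 (le_trans (sg_mul_le a b)). Qed.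

Lemma norm_shift_to (M a b : R) : a != 0 -> `|b + shift_to M a b * a| = `|M|.
Proof.
by move=> a0; rewrite norm_add_scale_sg // divfK ?normr_eq0 // addrC subrK.
Qed.

Lemma norm_shift_le (M a b t : R) : `|b| <= M -> a != 0 -> 0 <= t ->
  t <= shift_to M a b -> `|b + t * a| <= M.
Proof.
move=> bM a0 t0; rewrite ler_pdivlMr ?normr_gt0 // norm_add_scale_sg // => ta.
have := sg_mul_ge a b; have := normr_ge0 a; rewrite ler_norml; nra.
Qed.

Lemma shift_to_ge (M a b s : R) : a != 0 -> 2 * `|b| <= M ->
  2 * s * `|a| <= M -> s <= shift_to M a b.
Proof.
move=> a0 bM sa; rewrite ler_pdivlMr ?normr_gt0 //.
have := sg_mul_le a b; lra.
Qed.

(* Since [z] and [y] vanish at infinity, the admissible shifts [shift_to M (y k) (z k)]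
   grow without bound, so a least one exists. *)
Lemma c0_shift_attains (z y : nat -> R) (M : R) : 0 < M -> in_c0 z -> in_c0 y ->
  (forall k, `|z k| <= M) -> (exists k, y k != 0) ->
  exists t k1, [/\ y k1 != 0, `|z k1 + t * y k1| = M &
    forall k, `|z k + t * y k| <= M].
Proof.
move=> M0 z0 y0 zM [k0 yk0]; pose T k := shift_to M (y k) (z k).
have T0 : 0 <= T k0 by apply: shift_to_ge0.
have [k1 yk1 T_min] : exists2 k1, y k1 != 0 & forall k, y k != 0 -> T k1 <= T k.
  have [Jz Jz_lt] := in_c0_lt z0 (divr_gt0 M0 (ltr0Sn R 1)).
  have TM : 0 < M / (2 * (T k0 + 1)) by rewrite divr_gt0 // mulr_gt0 ?ltr_wpDl.
  have [Jy Jy_lt] := in_c0_lt y0 TM.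
  apply: (eventually_ge_argmin (J := maxn Jz Jy) yk0) => k.
  rewrite geq_max => /andP[/Jz_lt zk /Jy_lt yk] ykn0.
  rewrite ltr_pdivlMr ?mulr_gt0 ?ltr_wpDl // in yk.
  by apply: shift_to_ge => //; have := normr_ge0 (y k); nra.
exists (T k1), k1; split => //.
  by rewrite norm_shift_to // ger0_norm // ltW.
move=> k; have [->|yk] := eqVneq (y k) 0; first by rewrite mulr0 addr0.
by apply: norm_shift_le; rewrite ?T_min ?shift_to_ge0.
Qed.

End Peak.

Lemma lp_subspace_peak (R : realType) (p : R) (Z : set (nat -> R)) N
    (v : 'I_N -> nat -> R) :
  0 < p -> lp_subspace p Z -> (forall i, Z (v i)) -> lin_indep v ->
  forall j, (j <= N)%N -> exists z M S, Z z /\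
    [/\ 0 < M, size S = j, uniq S, {in S, forall s, `|z s| = M} &
        forall k, `|z k| <= M].
Proof.
move=> p0 Zsub Zv vindep; elim=> [_|j IHj jN].
  exists (fun _ => 0), 1, [::]; split; first by case: Zsub => _ [].
  by split=> // k; rewrite normr0.
have [z [M [S [Zz [M0 Sj uS zS zM]]]]] := IHj (ltnW jN).
have SN : (size S < N)%N by rewrite Sj.
have [y [Zy y_n0 yS]] := lp_subspace_vanishing Zsub Zv vindep SN.
have [t [k1 [yk1 zk1 ztM]]] := c0_shift_attains M0 (in_lp_c0 p0 (Zsub.1 z Zz))
  (in_lp_c0 p0 (Zsub.1 y Zy)) zM y_n0.
have k1S : k1 \notin S by apply: contra yk1 => /yS ->.
exists (fun k => 1 * z k + t * y k), M, (k1 :: S); split; first exact: Zsub.2.2.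
split; rewrite /= ?Sj ?k1S //; last by move=> k; rewrite mul1r.
move=> s; rewrite inE mul1r => /predU1P[->|sS] //.
by rewrite yS // mulr0 addr0 zS.
Qed.

Section LorentzEstimate.
Variables (R : realType) (w : nat -> R) (p : R).
Hypotheses (wL : lorentz_weight w) (p0 : 0 < p).

Lemma lorentz_weight_nonincreasing : nonincreasing_seq w.
Proof. by case: wL => _ [/nonincreasing_seqP wn _]. Qed.

Lemma lorentz_weight_ge0 n : 0 <= w n.
Proof.
case: wL => _ [_ [w0 _]].
have := nonincreasing_cvgn_ge lorentz_weight_nonincreasing (cvgP _ w0) n.
by rewrite (cvg_lim _ w0).
Qed.

Lemma lorentz_weight_le1 n : w n <= 1.
Proof. by case: wL => <- _; apply: lorentz_weight_nonincreasing. Qed.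

Variables (x : nat -> R) (M : R).
Hypotheses (x_c0 : in_c0 x) (x_le : forall k, `|x k| <= M).
Hypothesis x_lp : cvgn (series (fun k => `|x k| `^ p)).

Let norm_pow k := `|x k| `^ p.
Let rearr_pow n := rearr x n `^ p.

Lemma rearr_pow_partial_le m : \sum_(0 <= n < m) rearr_pow n <= limn (series norm_pow).
Proof.
have [A uA AX] := rearr_sum_le_seq x_le (ltW p0) x_c0 m.
by apply: le_trans AX (sum_uniq_le_limn_series _ uA x_lp) => k; apply: powR_ge0.
Qed.

(* The first K weights are at most 1 and x*_n <= M; the remaining ones are at most w_K. *)
Lemma lorentz_series_le K m : series (fun n => w n * rearr_pow n) m <=
  K%:R * M `^ p + w K * limn (series norm_pow).
Proof.
have w0 := lorentz_weight_ge0; have r0 n : 0 <= rearr_pow n by apply: powR_ge0.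
apply: le_trans (series_nondecreasing (fun n => mulr_ge0 (w0 n) (r0 n))
  (leq_maxl m K)) _.
rewrite /series /= (big_cat_nat (n := K)) ?leq_maxr //=; apply: lerD.
  rewrite mulr_natl -[K in _ *+ K]subn0 -sumr_const_nat; apply: ler_sum => n _.
  rewrite -[leRHS]mul1r ler_pM ?lorentz_weight_le1 //.
  by apply: ge0_ler_powR; rewrite ?nnegrE ?(ltW p0) ?(rearr_ge0 x_le) ?(rearr_le x_le)
    ?(le_trans (normr_ge0 (x 0%N)) (x_le 0%N)).
apply: le_trans (_ : \sum_(K <= n < maxn m K) w K * rearr_pow n <= _).
  apply: ler_sum_nat => n /andP[Kn _]; rewrite ler_wpM2r //.
  exact: lorentz_weight_nonincreasing.
rewrite -mulr_sumr ler_wpM2l //; apply: le_trans (rearr_pow_partial_le (maxn m K)).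
by rewrite [leRHS](big_cat_nat (n := K)) ?leq_maxr //= lerDr sumr_ge0.
Qed.

End LorentzEstimate.

Lemma lp_peak_pow_le (R : realType) (p : R) (x : nat -> R) (M : R) (S : seq nat) :
  uniq S -> {in S, forall s, `|x s| = M} -> cvgn (series (fun k => `|x k| `^ p)) ->
  (size S)%:R * M `^ p <= limn (series (fun k => `|x k| `^ p)).
Proof.
move=> uS xS x_lp; apply: le_trans (sum_uniq_le_limn_series _ uS x_lp) => [|k].
  rewrite (eq_big_seq (fun=> M `^ p)) => [|s /xS <- //].
  by rewrite big_const_seq count_predT iter_addr_0 mulr_natl.
exact: powR_ge0.
Qed.

Lemma powRV_lt_mul (R : realType) (p a b c : R) : 0 < p -> 0 <= a -> 0 <= b ->
  0 <= c -> a < c `^ p * b -> a `^ p^-1 < c * b `^ p^-1.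
Proof.
move=> p0 a0 b0 c0 ab; have pV0 : 0 < p^-1 by rewrite invr_gt0.
apply: lt_le_trans (gt0_ltr_powR pV0 _ _ ab) _; rewrite ?nnegrE //.
  by rewrite mulr_ge0 ?powR_ge0.
by rewrite powRM ?powR_ge0 // -powRrM mulfV ?gt_eqF // powRr1.
Qed.

Theorem theorem4p3 (R : realType) (p : R) (w : nat -> R) :
  1 <= p -> lorentz_weight w ->
  forall eps : R, 0 < eps ->
  exists N : nat, forall Z : set (nat -> R),
    lp_subspace p Z -> dim_ge Z N ->
    exists z, Z z /\ dwp_norm w p (jmap z) < eps * lp_norm p z.
Proof.
move=> p1 wL eps eps0; have p0 : 0 < p := lt_le_trans ltr01 p1.
pose e := eps `^ p; have e0 : 0 < e by apply: powR_gt0.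
have [K wK] : exists K, w K < e / 2.
  case: wL => _ [_ [/cvgr_lt w0 _]].
  by have [K _ HK] := w0 _ (divr_gt0 e0 (ltr0Sn R 1)); exists K; apply: HK => /=.
pose N := (Num.Def.truncn (2 * K%:R / e)).+1.
have KN : K%:R < e / 2 * N%:R.
  by have := truncnS_gt (2 * K%:R / e); rewrite ltr_pdivrMr // -/N; lra.
exists N => Z Zsub [v [Zv vindep]].
have [z [M [S [Zz [M0 SN uS zS zM]]]]] := lp_subspace_peak p0 Zsub Zv vindep (leqnn N).
have z_lp := Zsub.1 z Zz; have Mp0 : 0 < M `^ p by apply: powR_gt0.
have NM := lp_peak_pow_le uS zS z_lp; rewrite SN in NM.
have /andP[D0 DB] := limn_series_le
  (fun n => mulr_ge0 (lorentz_weight_ge0 wL n) (powR_ge0 _ _))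
  (lorentz_series_le wL p0 (in_lp_c0 p0 z_lp) zM z_lp K).
have L0 : 0 < limn (series (fun k => `|z k| `^ p)).
  by apply: lt_le_trans NM; rewrite mulr_gt0 ?ltr0Sn.
exists z; split => //; apply: powRV_lt_mul; rewrite ?(ltW eps0) ?(ltW L0) //.
apply: le_lt_trans DB _; rewrite -/e; nra.
Qed.
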